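(* For any $\phi\in\mathcal{C}$, $$\delta(\phi)(\omega)=\int_0^1\int_{\mathbb{U}}\phi(u,t,\omega)\,\tilde\mu_\omega(du,dt).$$
   Context: Let $\mathbb{U}$ be a Lusin space and $\nu$ a $\sigma$-finite measure on $(\mathbb{U},\mathcal{B}(\mathbb{U}))$ with $\nu(\mathbb{U})=\infty$. $\Omega$ is the set of integer-valued measures $\omega$ on $\mathbb{U}\times[0,1]$ with $\omega(\{(u,t)\})\le1$ and $\omega(A\times[0,1])<\infty$ whenever $\nu(A)<\infty$; $\mu_\omega:=\omega$; $\mathcal{F}_t:=\sigma\{\mu_\omega(A\times(0,s]):s\le t,A\in\mathcal{B}(\mathbb{U})\}$; $\mathbb{P}$ makes $\mu$ a Poisson random measure with intensity $\pi(du,dt)=\nu(du)dt$; $\tilde\mu_\omega:=\mu_\omega-\pi$. For $(u,t)\in\mathbb{U}\times[0,1]$, $\varepsilon^-_{(u,t)}$ removes a mass: $(\varepsilon^-_{(u,t)}\omega)(A):=\omega(A\cap\{(u,t)\}^c)$. For $\phi\in L^1(\pi\times\mathbb{P})$ the divergence is $\delta(\phi)(\omega):=\int_0^1\int_{\mathbb{U}}\phi(u,t,\varepsilon^-_{(u,t)}\omega)\,\tilde\mu_\omega(du,dt)$. $\mathcal{C}$ is the linear span of processes $\phi(u,t,\omega)=1_{(t_0,t_1]}(t)g(u,\omega)$, where $0\le t_0<t_1\le1$, $g$ is bounded and $\mathcal{B}(\mathbb{U})\times\mathcal{F}_{t_0}$-measurable, and $g(u,\omega)1_{U^c}(u)=0$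 for some $U\in\mathcal{B}(\mathbb{U})$ with $\nu(U)<\infty$. *)

From HB Require Import structures.
From mathcomp Require Import all_boot all_order all_algebra.
From mathcomp Require Import all_classical all_reals all_analysis.
From mathcomp Require Import measurable_realfun lebesgue_measure.
Set Implicit Arguments. Unset Strict Implicit. Unset Printing Implicit Defensive.
Import Order.TTheory GRing.Theory Num.Theory.
Local Open Scope classical_set_scope.
Local Open Scope ring_scope.

Definition Borel (T : ptopologicalType) := g_sigma_algebraType (@open T).

(* Polish space: separable, completely metrizable (here: a Hausdorff complete
   pseudometric space with a countable dense subset). *)
Definition lusin_space (R : realType) (T : ptopologicalType) : Prop :=
  hausdorff_space T /\
  exists (P : completePseudoMetricType R) (f : P -> T),
    [/\ hausdorff_space P, (exists D : set P, countable D /\ dense D),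
        continuous f & bijective f].

Section poisson_setting.
Context {R : realType} {T : ptopologicalType}.
Local Notation U := (Borel T).
Local Notation I01 := (`[(0:R), (1:R)]%classic : set R).

(* candidate elements omega : set functions on U x R (time component in [0,1]) *)
Definition pfun_om := set (U * R)%type -> \bar R.

Definition is_measure (w : pfun_om) : Prop :=
  [/\ w set0 = 0%E, (forall A, measurable A -> (0 <= w A)%E) & semi_sigma_additive w].

Definition Omega (nu : set U -> \bar R) : set pfun_om := [set w |
  [/\ is_measure w,
      w (setT `*` ~` I01) = 0%E,
      (forall A, measurable A -> w A = +oo%E \/ exists n : nat, w A = (n%:R)%:E),
      (forall p, (w [set p] <= 1)%E) &
      (forall A : set U, measurable A -> (nu A < +oo)%E ->
         (w (A `*` I01) < +oo)%E)]].

Definition Fgen (nu : set U -> \bar R) (t : R) : set (set pfun_om) :=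
  [set E | exists (A : set U) (s : R) (B : set (\bar R)),
     [/\ measurable A, s <= t, measurable B &
         E = [set w | Omega nu w /\ B (w (A `*` (`]0, s]%classic : set R)))]]].

Definition filt (nu : set U -> \bar R) (t : R) : set (set pfun_om) :=
  smallest (sigma_algebra (Omega nu)) (Fgen nu t).

Definition prod_filt (nu : set U -> \bar R) (t : R) : set (set (U * pfun_om)) :=
  smallest (sigma_algebra (setT `*` Omega nu))
    [set E | exists (A : set U) (B : set pfun_om),
       [/\ measurable A, filt nu t B & E = A `*` B]].

Definition elem (t0 t1 : R) (g : U -> pfun_om -> R) : U -> R -> pfun_om -> R :=
  fun u t w => \1_(`]t0, t1]%classic) t * g u w.

Definition elem_ok (nu : set U -> \bar R) (t0 t1 : R) (g : U -> pfun_om -> R) : Prop :=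
  [/\ (0 <= t0 /\ t0 < t1 /\ t1 <= 1),
      (exists M : R, forall u w, Omega nu w -> `|g u w| <= M),
      (forall B : set R, measurable B ->
         prod_filt nu t0 [set z | (setT `*` Omega nu) z /\ B (g z.1 z.2)]) &
      (exists V : set U, [/\ measurable V, (nu V < +oo)%E &
         forall u w, Omega nu w -> ~ V u -> g u w = 0])].

Definition in_C (nu : set U -> \bar R) (phi : U -> R -> pfun_om -> R) : Prop :=
  exists (n : nat) (c a b : 'I_n -> R) (g : 'I_n -> U -> pfun_om -> R),
    (forall i, elem_ok nu (a i) (b i) (g i)) /\
    (forall u t w, I01 t -> Omega nu w ->
       phi u t w = \sum_(i < n) c i * elem (a i) (b i) (g i) u t w).

Definition pi_int (nu : set U -> \bar R) : set (U * R)%type -> \bar R :=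
  (nu \x (@lebesgue_measure R))%E.

(* integral over U x [0,1] against the compensated measure mu_omega - pi *)
Definition comp_int (nu : set U -> \bar R) (w : pfun_om) (f : U * R -> R) : \bar R :=
  (\int[w]_(z in setT `*` I01) (f z)%:E
   - \int[pi_int nu]_(z in setT `*` I01) (f z)%:E)%E.

Definition eps_minus (p : U * R) (w : pfun_om) : pfun_om := fun A => w (A `&` ~` [set p]).

Definition divergence (nu : set U -> \bar R) (phi : U -> R -> pfun_om -> R) (w : pfun_om) : \bar R :=
  comp_int nu w (fun z => phi z.1 z.2 (eps_minus z w)).

End poisson_setting.

From HB Require Import structures.
From mathcomp Require Import all_boot all_order all_algebra.
From mathcomp Require Import all_classical all_reals all_analysis.
From mathcomp Require Import measurable_realfun lebesgue_measure.
Local Open Scope classical_set_scope.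
Local Open Scope ring_scope.
Import Order.TTheory GRing.Theory Num.Theory.

(** Removing the atom of [w] at [(u, t)] leaves [w] unchanged on every set
   [A x (0, s]] with [s < t], so it yields a point of Omega that is
   indistinguishable from [w] by [F_s].  An elementary process
   [1_(t0, t1](t) g(u, w)] only evaluates [g(u, .)] when [t > t0], and
   [g(u, .)] is [F_t0]-measurable, hence takes the same value at both points. *)

Lemma smallest_sigma_algebra_agree (T : Type) (D : set T) (G : set (set T))
    (x y : T) :
  (D x <-> D y) -> (forall E, G E -> (E x <-> E y)) ->
  forall E, smallest (sigma_algebra D) G E -> (E x <-> E y).
Proof.
move=> Dxy Gxy; apply: smallest_sub => //; split => //=.
- by move=> A Axy; split=> -[Dz nAz]; split; by [apply/Dxy | move/Axy].
- by move=> F Fxy; split=> -[k _ Fk]; exists k => //; apply/Fxy.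
Qed.

Lemma eq_integral_setfun {d} {T : measurableType d} {R : realType}
    (mu : set T -> \bar R) {D : set T} {f g : T -> \bar R} :
  {in D, f =1 g} -> integral mu D f = integral mu D g.
Proof. by rewrite /integral => /eq_restrictP ->. Qed.

Lemma Borel_measurable_set1 (T : ptopologicalType) :
  accessible_space T -> forall x : Borel T, measurable [set x].
Proof.
move=> T1 x; rewrite -[X in measurable X]setCK; apply: measurableC.
by apply: sub_gen_smallest; rewrite openC; exact: accessible_closed_set1.
Qed.

Section removal_of_an_atom.
Context {R : realType} {T : ptopologicalType}.
Local Notation U := (Borel T).
Local Notation I01 := (`[(0:R), (1:R)]%classic : set R).

Lemma measurable_set1_prod (z : U * R) :
  accessible_space T -> measurable [set z].
Proof.
case: z => u t T1.
have -> : [set (u, t)] = [set u] `*` [set t].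
  by apply/seteqP; split=> -[x y] /=; [case=> -> -> | case=> /= -> ->].
by apply: measurableX; [exact: Borel_measurable_set1 | exact: measurable_set1].
Qed.

Lemma is_measure_le (w : @pfun_om R T) (A B : set (U * R)) : is_measure w ->
  measurable A -> measurable B -> A `<=` B -> (w A <= w B)%E.
Proof.
move=> [w0 w_ge0 wsa] mA mB AB.
have add2 := semi_additiveW w0 (semi_sigma_additive_is_additive w0 wsa).
rewrite -(setDUK AB) add2 ?setDUK ?setDIK //; last exact: measurableD.
by rewrite leeDl // w_ge0 //; exact: measurableD.
Qed.

Lemma is_measure_setI (w : @pfun_om R T) (D : set (U * R)) : measurable D ->
  is_measure w -> is_measure (fun A => w (A `&` D)).
Proof.
move=> mD [w0 w_ge0 wsa]; split; first by rewrite set0I.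
- by move=> A mA; apply: w_ge0; exact: measurableI.
- move=> F mF tF mUF; rewrite setI_bigcupl; apply: wsa.
  + by move=> i; exact: measurableI.
  + by move=> i j _ _ [x [[Fix _] [Fjx _]]]; apply: tF => //; exists x.
  + by rewrite -setI_bigcupl; exact: measurableI.
Qed.

Lemma eps_minus_Omega {nu : set U -> \bar R} {w : @pfun_om R T} (z : U * R) :
  accessible_space T -> Omega nu w -> Omega nu (eps_minus z w).
Proof.
move=> T1 [wm wout wint wat wfin].
have mz : measurable (~` [set z]).
  by apply: measurableC; exact: measurable_set1_prod.
have le_w A : measurable A -> (eps_minus z w A <= w A)%E.
  by move=> mA; apply: is_measure_le => //; exact: measurableI.
have mI01C : measurable (setT `*` ~` I01 : set (U * R)).
  by apply: measurableX => //; exact: measurableC.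
split.
- exact: is_measure_setI.
- apply/le_anti/andP; split; first by rewrite -wout le_w.
  by case: wm => _ w_ge0 _; apply/w_ge0/measurableI.
- by move=> A mA; apply/wint/measurableI.
- by move=> p; apply: le_trans (wat p); apply: le_w; exact: measurable_set1_prod.
- move=> A mA nuA; apply: le_lt_trans (wfin A mA nuA); apply: le_w.
  exact: measurableX.
Qed.

Definition agree_until (t : R) (w w' : @pfun_om R T) : Prop :=
  forall A s, measurable A -> s <= t ->
    w' (A `*` (`]0, s]%classic : set R)) = w (A `*` (`]0, s]%classic : set R)).

Lemma eps_minus_agree_until (t0 t : R) (u : U) (w : @pfun_om R T) :
  t0 < t -> agree_until t0 w (eps_minus (u, t) w).
Proof.
move=> t0t A s _ st0; congr w; apply/setIidl => -[x y] [_ /= ys] [_ yt].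
move: ys; rewrite yt in_itv /= => /andP[_ ts].
by move: (le_lt_trans ts (le_lt_trans st0 t0t)); rewrite ltxx.
Qed.

Section agreeing_points.
Context {nu : set U -> \bar R} {t : R} {w w' : @pfun_om R T}.
Hypotheses (Ow : Omega nu w) (Ow' : Omega nu w') (ww' : agree_until t w w').

Lemma filt_agree {E} : filt nu t E -> (E w <-> E w').
Proof.
move: E; apply: smallest_sigma_algebra_agree => //.
by move=> _ [A [s [B [mA st mB ->]]]] /=; rewrite ww' //; split=> -[].
Qed.

Lemma prod_filt_agree {E} : prod_filt nu t E -> forall u, (E (u, w) <-> E (u, w')).
Proof.
move=> + u; move: E; apply: smallest_sigma_algebra_agree; first by split=> -[].
move=> _ [A [B [mA fB ->]]] /=; have [BwB Bw'B] := filt_agree fB.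
by split=> -[Au ?]; split; auto.
Qed.

Lemma elem_ok_agree {t1 : R} {g : U -> @pfun_om R T -> R} (u : U) :
  elem_ok nu t t1 g -> g u w' = g u w.
Proof.
move=> [_ _ g_adapted _].
have [+ _] := prod_filt_agree (g_adapted _ (measurable_set1 (g u w))) u.
by move=> /(_ (conj (conj I Ow) erefl)) [].
Qed.

End agreeing_points.

Lemma elem_eps_minus {nu : set U -> \bar R} {t0 t1 : R} {g : U -> @pfun_om R T -> R}
    {w : @pfun_om R T} (u : U) (t : R) :
  accessible_space T -> elem_ok nu t0 t1 g -> Omega nu w ->
  elem t0 t1 g u t (eps_minus (u, t) w) = elem t0 t1 g u t w.
Proof.
move=> T1 gok Ow; rewrite /elem.
have [tin|tnin] := boolP (t \in (`]t0, t1]%classic : set R)); last first.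
  by rewrite /indic (negbTE tnin) !mul0r.
move: tin; rewrite inE /= in_itv /= => /andP[t0t _].
congr (_ * _); apply: (elem_ok_agree Ow (eps_minus_Omega (u, t) T1 Ow) _ u gok).
exact: eps_minus_agree_until.
Qed.

Lemma in_C_eps_minus {nu : set U -> \bar R} {phi : U -> R -> @pfun_om R T -> R}
    {w : @pfun_om R T} (u : U) (t : R) :
  accessible_space T -> in_C nu phi -> Omega nu w -> I01 t ->
  phi u t (eps_minus (u, t) w) = phi u t w.
Proof.
move=> T1 [n [c [a [b [g [gok phiE]]]]]] Ow t01.
rewrite !phiE //; last exact: eps_minus_Omega.
by apply: eq_bigr => i _; rewrite (elem_eps_minus _ _ T1 (gok i) Ow).
Qed.

End removal_of_an_atom.

Theorem lemma3p1 (R : realType) (T : ptopologicalType)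
  (hT : lusin_space R T)
  (nu : {measure set (Borel T) -> \bar R})
  (nu_sf : sigma_finite setT nu) (nu_inf : nu setT = +oo%E)
  (phi : Borel T -> R -> @pfun_om R T -> R) (hphi : in_C nu phi)
  (w : @pfun_om R T) (hw : Omega nu w) :
  divergence nu phi w = comp_int nu w (fun z => phi z.1 z.2 w).
Proof.
have T1 : accessible_space T by apply: hausdorff_accessible; case: hT.
have phi_eps : {in setT `*` `[0, 1]%classic,
    (fun z => (phi z.1 z.2 (eps_minus z w))%:E) =1 (fun z => (phi z.1 z.2 w)%:E)}.
  by move=> [u t] /[1!inE] -[_ /= t01]; rewrite (in_C_eps_minus _ _ T1 hphi hw t01).
by rewrite /divergence /comp_int; congr (_ - _)%E; exact: eq_integral_setfun phi_eps.
Qed.
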